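(* For any infinite subset $A$ of an almost Clifford semigroup $S$, the set $AA=\{xy:x,y\in A\}$ is infinite.
   Context: The Clifford part $H(S)$ of a semigroup $S$ is the union of all subgroups of $S$; $S$ is almost Clifford if $S\setminus H(S)$ is finite. *)

From mathcomp Require Import all_boot.
From mathcomp Require Import boolp classical_sets cardinality.
Set Implicit Arguments. Unset Strict Implicit. Unset Printing Implicit Defensive.
Local Open Scope classical_set_scope.

(* A semigroup is a carrier T with an associative operation op (the
   associativity hypothesis is a binder of the theorem). *)

Definition is_subgroup (T : Type) (op : T -> T -> T) (G : set T) : Prop :=
  exists e : T,
    G e /\
    (forall x y, G x -> G y -> G (op x y)) /\
    (forall x, G x -> op e x = x /\ op x e = x) /\
    (forall x, G x -> exists y, G y /\ op x y = e /\ op y x = e).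

Definition clifford_part (T : Type) (op : T -> T -> T) : set T :=
  [set x | exists G : set T, is_subgroup op G /\ G x].

Definition almost_clifford (T : Type) (op : T -> T -> T) : Prop :=
  finite_set (~` clifford_part op).

Definition setprod (T : Type) (op : T -> T -> T) (A : set T) : set T :=
  [set z | exists x y, A x /\ A y /\ z = op x y].

From mathcomp Require Import all_boot.
From mathcomp Require Import boolp classical_sets cardinality.
Set Implicit Arguments. Unset Strict Implicit. Unset Printing Implicit Defensive.
Local Open Scope classical_set_scope.

(* Suppose AA is finite.  Since S \ H(S) is finite, the set
   B = A ∩ H(S) is infinite.  The squares x·x of elements of B lie in AA, so
   there are only finitely many of them, and by the pigeonhole principle some
   fibre X = {x ∈ B | x·x = s} of the squaring map is infinite.
   Two subgroups sharing an element have the same identity; hence all elements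
   of X lie in subgroups with one common identity e (the identity of the
   subgroup through s).  Fixing x ∈ X with inverse x' with respect to e, every
   y ∈ X is recovered as y = x'·(x·y), so X lies in the image under left
   multiplication by x' of the finite set x·X ⊆ AA: a contradiction. *)

Lemma infinite_setI_cofinite (T : Type) (A P : set T) :
  infinite_set A -> finite_set (~` P) -> infinite_set (A `&` P).
Proof.
move=> infA finCP finAP; apply: infA.
apply: (sub_finite_set (B := (A `&` P) `|` ~` P)); last by rewrite finite_setU.
by move=> x Ax; case: (pselect (P x)) => Px; [left | right].
Qed.

Lemma infinite_fibre (T U : Type) (f : T -> U) (B : set T) :
  infinite_set B -> finite_set (f @` B) ->
  exists s, infinite_set (B `&` f @^-1` [set s]).
Proof.
move=> infB finfB; apply: contrapT => noinf; apply: infB.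
apply: (sub_finite_set (B := \bigcup_(s in f @` B) (B `&` f @^-1` [set s]))).
  by move=> x Bx; exists (f x) => //; exists x.
apply: bigcup_finite => // s _.
by apply: contrapT => infs; apply: noinf; exists s.
Qed.

Section CliffordPart.
Variables (T : Type) (op : T -> T -> T).
Hypothesis op_assoc : forall x y z, op x (op y z) = op (op x y) z.

Definition subgroup_with_identity (G : set T) (e : T) : Prop :=
  G e /\
  (forall x y, G x -> G y -> G (op x y)) /\
  (forall x, G x -> op e x = x /\ op x e = x) /\
  (forall x, G x -> exists y, G y /\ op x y = e /\ op y x = e).

(* Two subgroups with a common element have the same identity:
   f·e = f·(s·s') = s·s' = e and f·e = (t·s)·e = t·s = f. *)
Lemma subgroup_identity_unique (G H : set T) (e f s : T) :
  subgroup_with_identity G e -> subgroup_with_identity H f ->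
  G s -> H s -> e = f.
Proof.
move=> [_ [_ [Gid Ginv]]] [_ [_ [Hid Hinv]]] Gs Hs.
have [s' [_ [ss' _]]] := Ginv s Gs.
have [t [_ [_ ts]]] := Hinv s Hs.
have fe_e : op f e = e by rewrite -ss' op_assoc (proj1 (Hid s Hs)).
have fe_f : op f e = f by rewrite -ts -op_assoc (proj2 (Gid s Gs)).
by rewrite -fe_e fe_f.
Qed.

Lemma same_square_recover (x : T) : clifford_part op x ->
  exists x', forall y, clifford_part op y -> op y y = op x x ->
    op x' (op x y) = y.
Proof.
move=> [G [[e Ge] Gx]].
have GeS : subgroup_with_identity G e := Ge.
have [_ [Gcl [_ Ginv]]] := GeS.
have [x' [_ [_ x'x]]] := Ginv x Gx.
exists x' => y [H [[f Hf] Hy]] yy_xx.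
have HfS : subgroup_with_identity H f := Hf.
have [_ [Hcl [Hid _]]] := HfS.
have ef : e = f.
  apply: (subgroup_identity_unique (s := op x x) GeS HfS); first exact: Gcl.
  by rewrite -yy_xx; apply: Hcl.
by rewrite op_assoc x'x ef (proj1 (Hid y Hy)).
Qed.

End CliffordPart.

Theorem mainTheorem20 (T : Type) (op : T -> T -> T)
  (op_assoc : forall x y z, op x (op y z) = op (op x y) z)
  (hS : almost_clifford op) (A : set T) (hA : infinite_set A) :
  infinite_set (setprod op A).
Proof.
move=> finAA.
pose B := A `&` clifford_part op.
have infB : infinite_set B by exact: infinite_setI_cofinite.
have finSq : finite_set ((fun x => op x x) @` B).
  by apply: sub_finite_set finAA => _ [x [Ax _] <-]; exists x, x.
have [s infX] := infinite_fibre infB finSq.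
set X := B `&` _ @^-1` _ in infX.
have [x [[Ax Hx] xx_s]] := infinite_setN0 infX.
have [x' recover] := same_square_recover op_assoc Hx.
apply: infX; apply: (sub_finite_set (B := op x' @` (op x @` X))).
  move=> y Xy; have [[_ Hy] yy_s] := Xy.
  by exists (op x y); [exists y | apply: recover; rewrite ?yy_s ?xx_s].
apply/finite_image/(sub_finite_set _ finAA).
by move=> _ [y [[Ay _] _] <-]; exists x, y.
Qed.
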